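(* For any $\eta\in(0,\tfrac12)$ and any sequence of true labels $y_1,\dots,y_T$ (and expert advice), the probabilities $p_1,\dots,p_T$ and estimated losses $\hat\ell_1,\dots,\hat\ell_T$ produced by EXP4.AT with learning rate $\eta$ satisfy $$\sum_{t=1}^T\sum_{y\in\{0,1\}}p_t^y\hat\ell_t(y) - \inf_{j\in[N]}\sum_{t=1}^T\hat\ell_t(\mathcal{E}^j_t) \le \frac{\ln N}{\eta} + \eta\sum_{t=1}^T\hat\ell_t(1) + \eta\sum_{t=1}^T p_t^1(1-p_t^1)\hat\ell_t(0)^2 + \eta\sum_{t=1}^T p_t^1\hat\ell_t(1)^2.$$
   Context: Binary prediction with $N$ experts under apple tasting feedback. EXP4.AT with learning rate $\eta\in(0,\tfrac12)$: let $q_1$ be uniform on $[N]$. In each round $t=1,\dots,T$: receive advice $\mathcal{E}^1_t,\dots,\mathcal{E}^N_t\in\{0,1\}$; set $p_t^1=(1-\eta)\sum_{i=1}^N q_t^i\mathcal{E}^i_t+\eta$ and $p_t^0=1-p_t^1$; predict $\hat y_t=1$ with probability $p_t^1$ and $\hat y_t=0$ otherwise; the true label $y_t$ is observed only if $\hat y_t=1$; define $\hat\ell_t(y)=\mathbb{1}\{y\ne y_t\}\mathbb{1}\{\hat y_t=1\}/p_t^1$ for $y\in\{0,1\}$; update $q_{t+1}^i=\frac{q_t^i\exp(-\eta\hat\ell_t(\mathcal{E}^i_t))}{\sum_{j=1}^N q_t^j\exp(-\eta\hat\ell_t(\mathcal{E}^j_t))}$. The inequality holds for every realization of the algorithm's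 random predictions. *)

From HB Require Import structures.
From mathcomp Require Import all_boot all_order all_algebra.
From mathcomp Require Import reals sequences exp.
Set Implicit Arguments. Unset Strict Implicit. Unset Printing Implicit Defensive.
Import Order.TTheory GRing.Theory Num.Theory.
Local Open Scope ring_scope.

(* Rounds are indexed t = 0, 1, 2, ... (round t here = round t+1 of the paper).
   E t i  : advice of expert i in round t (in {0,1}, encoded as bool).
   y t    : true label of round t.
   yh t   : the realized prediction \hat y_t of the algorithm in round t. *)

Section EXP4AT.
Variables (R : realType) (N : nat) (eta : R)
          (E : nat -> 'I_N -> bool) (y yh : nat -> bool).

Definition p1_of (t : nat) (qt : 'I_N -> R) : R :=
  (1 - eta) * (\sum_(i < N) qt i * (E t i)%:R) + eta.

Definition lhat_of (t : nat) (qt : 'I_N -> R) (b : bool) : R :=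
  (b != y t)%:R * (yh t)%:R / p1_of t qt.

Fixpoint q (t : nat) : 'I_N -> R :=
  match t with
  | 0 => fun _ => (N%:R)^-1
  | t'.+1 =>
      let qt := q t' in
      fun i => qt i * expR (- (eta * lhat_of t' qt (E t' i))) /
               (\sum_(j < N) qt j * expR (- (eta * lhat_of t' qt (E t' j))))
  end.

Definition p1 (t : nat) : R := p1_of t (q t).

Definition pr (t : nat) (b : bool) : R := if b then p1 t else 1 - p1 t.

Definition lhat (t : nat) (b : bool) : R := lhat_of t (q t) b.

End EXP4AT.

From HB Require Import structures.
From mathcomp Require Import all_boot all_order all_algebra.
From mathcomp Require Import reals sequences exp.
From mathcomp Require Import ring lra.
Set Implicit Arguments. Unset Strict Implicit. Unset Printing Implicit Defensive.
Import Order.TTheory GRing.Theory Num.Theory.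
Local Open Scope ring_scope.

(* Exponential-weights potential argument.  As [q_T^j <= 1], unrolling the
   multiplicative update gives [- ln N - eta sum_t lhat_t(E^j_t) <= sum_t ln W_t],
   where [W_t] is the normalizer of round [t], so it suffices to bound
   [sum_b p_t^b lhat_t(b) + ln W_t / eta] round by round.  If [a] is the weight
   of the experts advising 1, then [p = (1 - eta) a + eta] and
   [W_t = a e^(-eta lhat(1)) + (1 - a) e^(-eta lhat(0))], where only the label
   other than [y_t] has a nonzero estimated loss, namely [1/p] when [yhat_t = 1].
   The round bound thus reduces to two estimates of [ln W_t] in terms of the step
   [x = eta / p], which the exploration floor [p >= eta] keeps at most 1; they
   follow from [ln (1 + u) <= u], [(1 + x) e^(-x) <= 1] and [(1 + x/2)^2 <= e^x]. *)

Lemma sumr_gt0 (R : numDomainType) (I : finType) (i0 : I) (F : I -> R) :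
  (forall i, 0 < F i) -> 0 < \sum_i F i.
Proof.
move=> F_gt0; rewrite (bigD1 i0) //=.
by apply: ltr_pwDl => //; apply: sumr_ge0 => i _; apply: ltW.
Qed.

Section ExpBounds.
Context {R : realType}.
Implicit Types c e x z : R.

Lemma mul1D_expRN_le1 x : (1 + x) * expR (- x) <= 1.
Proof. by rewrite -[leRHS](expRxMexpNx_1 x) ler_wpM2r ?expR_ge0 ?expR_ge1Dx. Qed.

Lemma sqr_1Dhalf_le_expR x : -2 <= x -> (1 + x / 2) ^+ 2 <= expR x.
Proof.
move=> x_ge; rewrite [expR x](_ : _ = expR (x / 2) ^+ 2); last first.
  by rewrite expr2 -expRD -splitr.
apply: lerXn2r; rewrite ?nnegrE ?expR_ge1Dx ?expR_ge0 //; lra.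
Qed.

Lemma le_ln1Dmix c z : 0 <= c -> c <= 1 -> 0 < z ->
  ln (1 + c * (z - 1)) <= c * (z - 1).
Proof.
move=> c_ge0 c_le1 z_gt0; apply: le_ln1Dx; rewrite mulrBr mulr1.
have [c_gt0 | c_le0] := ltrP 0 c; last by rewrite (_ : c = 0); lra.
have := mulr_gt0 c_gt0 z_gt0; lra.
Qed.

Lemma one_sub_expRN_ge e x : e <= 1 -> 0 <= x -> x <= 2 * e ->
  (1 - e) ^+ 2 * x <= 1 - expR (- x).
Proof.
move=> e_le1 x_ge0 x_le; set s := (1 + x / 2) ^+ 2.
have s_gt0 : 0 < s by rewrite exprn_gt0 //; lra.
have sE : s * expR (- x) <= 1.
  rewrite -[leRHS](expRxMexpNx_1 x) ler_wpM2r ?expR_ge0 // sqr_1Dhalf_le_expR //.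
  lra.
have es : (1 - e) ^+ 2 * s <= 1.
  rewrite /s -exprMn; apply: exprn_ile1; nra.
have esx : (1 - e) ^+ 2 * s * x <= x by rewrite ler_piMl.
have s_ge : 1 + x <= s by rewrite /s; nra.
rewrite -subr_ge0 -(pmulr_rge0 _ s_gt0); nra.
Qed.

Lemma subr1_mul_expR_le x : 0 <= x -> x <= 2 ->
  (1 - x) * (expR x - 1) <= x - x ^+ 2 / 4.
Proof.
move=> x_ge0 x_le2; set s := (1 - x / 2) ^+ 2.
have sE : s * expR x <= 1.
  rewrite -[leRHS](expRxMexpNx_1 (- x)) opprK ler_wpM2r ?expR_ge0 //.
  by rewrite /s -mulNr sqr_1Dhalf_le_expR //; lra.
have e_ge1 : 1 <= expR x by rewrite -expR0 ler_expR.
have : 1 - x <= s by rewrite /s; nra.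
rewrite /s in sE *; nra.
Qed.

End ExpBounds.

Section OneRound.
Context {R : realType}.
Implicit Types e a p : R.

Lemma mixture_ratio_bounds e a p : 0 < e -> e <= 1 -> 0 <= a -> p = (1 - e) * a + e ->
  [/\ 0 < p, 0 <= e / p, e / p <= 1 & e / p * p = e].
Proof.
move=> e_gt0 e_le1 a_ge0 p_def.
have e_le_p : e <= p by rewrite p_def lerDr mulr_ge0 // subr_ge0.
have p_gt0 : 0 < p := lt_le_trans e_gt0 e_le_p.
by rewrite divr_ge0 ?ler_pdivrMr ?mul1r ?divfK ?gt_eqF // ltW.
Qed.

Lemma ln_mixture_label0 e a p : 0 < e -> e <= 1 -> 0 <= a -> a <= 1 ->
  p = (1 - e) * a + e ->
  ln (a * expR (- (e / p)) + (1 - a)) <= e * (2 * (e / p) - 1).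
Proof.
move=> e_gt0 e_le1 a_ge0 a_le1 p_def.
have [_ + _ +] := mixture_ratio_bounds e_gt0 e_le1 a_ge0 p_def.
move: (e / p) => x x_ge0 xp.
have ex_gt0 := expR_gt0 (- x); have ex_le := mul1D_expRN_le1 x.
move: (expR (- x)) ex_gt0 ex_le => ex ex_gt0 ex_le.
rewrite (_ : _ + _ = 1 + a * (ex - 1)); last by ring.
apply: le_trans (le_ln1Dmix a_ge0 a_le1 ex_gt0) _.
rewrite -(ler_pM2l (_ : 0 < 1 + x)); last lra.
have : e = x * a + x * e - e * x * a by rewrite -{1}xp p_def; ring.
have : a * ((1 + x) * ex) <= a by exact: ler_piMr.
have : 0 <= e * (x * x) by rewrite mulr_ge0 ?mulr_ge0 // ltW.
have : 0 <= e * (a * x) by rewrite mulr_ge0 ?mulr_ge0 // ltW.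
nra.
Qed.

Lemma ln_mixture_label1 e a p : 0 < e -> e <= 2^-1 -> 0 <= a -> a <= 1 ->
  p = (1 - e) * a + e ->
  ln (a + (1 - a) * expR (- (e / p))) <= - ((1 - e) * (1 - p) * (e / p)).
Proof.
move=> e_gt0 e_le_half a_ge0 a_le1 p_def.
have e_le1 : e <= 1 by lra.
have [p_gt0 + + +] := mixture_ratio_bounds e_gt0 e_le1 a_ge0 p_def.
move: (e / p) => x x_ge0 x_le1 xp.
have ex_gt0 := expR_gt0 (- x).
have one_sub_p : 1 - p = (1 - e) * (1 - a) by rewrite p_def; ring.
(* For [p >= 1/2] the step [x <= 2 e] is small and a second-order bound on
   [1 - e^(-x)] suffices; for small [p] almost all the weight is on the experts
   advising 0, so [e^(-x)] is factored out of the mixture first. *)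
have [p_ge_half | p_lt_half] := lerP 2^-1 p.
- have x_le : x <= 2 * e by nra.
  have tail := one_sub_expRN_ge e_le1 x_ge0 x_le.
  rewrite (_ : a + _ = 1 + (1 - a) * (expR (- x) - 1)); last by ring.
  have a_c_ge0 : 0 <= 1 - a by lra.
  have a_c_le1 : 1 - a <= 1 by lra.
  apply: le_trans (le_ln1Dmix a_c_ge0 a_c_le1 ex_gt0) _.
  rewrite one_sub_p; nra.
- have x_ge : 2 * e <= x by nra.
  have exK : expR (- x) * expR x = 1 by rewrite mulrC expRxMexpNx_1.
  have ex_ge1 : 1 <= expR x by rewrite -expR0 ler_expR.
  rewrite (_ : a + _ = expR (- x) * (1 + a * (expR x - 1))); last first.
    by rewrite -{1}[a]mulr1 -{1}exK; ring.
  rewrite lnM ?posrE // ?expRK; last nra.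
  have ln_le := le_ln1Dmix a_ge0 a_le1 (expR_gt0 x).
  have curv : (1 - x) * (expR x - 1) <= x - x ^+ 2 / 4.
    by apply: subr1_mul_expR_le => //; lra.
  have mass_a : (1 - e) * a = p * (1 - x).
    by rewrite mulrBr mulr1 (mulrC p) xp p_def; ring.
  have key : (1 - e) * (a * (expR x - 1)) <= e - e * x / 4.
    rewrite mulrA mass_a -mulrA -{1}xp.
    have : p * ((1 - x) * (expR x - 1)) <= p * (x - x ^+ 2 / 4).
      by rewrite ler_pM2l.
    nra.
  have px : (1 - p) * x = x - e by rewrite mulrBl mul1r mulrC xp.
  have e_lt1 : 0 < 1 - e by lra.
  have := ler_wpM2l (ltW e_lt1) ln_le.
  rewrite -(ler_pM2l e_lt1).
  (* what remains is [e (e (2 - e) - x (5/4 - e)) <= 0], true as [x >= 2 e] *)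
  have : 0 <= e * ((x - 2 * e) * (5 / 4 - e)).
    by rewrite mulr_ge0 ?mulr_ge0 //; lra.
  have : 0 <= e * (e * (2^-1 - e)) by rewrite mulr_ge0 ?mulr_ge0 //; lra.
  rewrite -mulrA px; nra.
Qed.

Lemma round_bound_mixture e a p (yt yht : bool) (l : bool -> R) :
  0 < e -> e <= 2^-1 -> 0 <= a -> a <= 1 -> p = (1 - e) * a + e ->
  (forall b, l b = (b != yt)%:R * yht%:R / p) ->
  \sum_(b : bool) (if b then p else 1 - p) * l b
    + ln (a * expR (- (e * l true)) + (1 - a) * expR (- (e * l false))) / e
  <= e * l true + e * (p * (1 - p) * l false ^+ 2) + e * (p * l true ^+ 2).
Proof.
move=> e_gt0 e_le_half a_ge0 a_le1 p_def lE.
have e_le1 : e <= 1 by lra.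
have [p_gt0 _ _ _] := mixture_ratio_bounds e_gt0 e_le1 a_ge0 p_def.
rewrite big_bool !lE {lE} /=.
case: yht; last first.
  by rewrite !(mulr0, mul0r, oppr0, expR0, mulr1) subrKC ln1 mul0r; lra.
have eV_ge0 : 0 <= e^-1 by rewrite invr_ge0 ltW.
case: yt => /=; rewrite !(mulr0, mul0r, mulr1, mul1r, oppr0, expR0, addr0, add0r).
  have h := ln_mixture_label1 e_gt0 e_le_half a_ge0 a_le1 p_def.
  rewrite [leRHS](_ : _ = (1 - p) / p + - ((1 - e) * (1 - p) * (e / p)) / e).
    by rewrite lerD2l ler_wpM2r.
  by field; rewrite !gt_eqF.
have h := ln_mixture_label0 e_gt0 e_le1 a_ge0 a_le1 p_def.
rewrite [leRHS](_ : _ = p / p + e * (2 * (e / p) - 1) / e).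
  by rewrite lerD2l ler_wpM2r.
by field; rewrite !gt_eqF.
Qed.

End OneRound.

Section Exp4AT.
Variables (R : realType) (N : nat) (eta : R) (E : nat -> 'I_N -> bool).
Variables (y yh : nat -> bool).
Hypothesis N_gt0 : (0 < N)%N.

Local Notation q := (q eta E y yh).
Local Notation lhat := (lhat eta E y yh).
Local Notation p1 := (p1 eta E y yh).
Local Notation pr := (pr eta E y yh).

Definition normalizer t := \sum_j q t j * expR (- (eta * lhat t (E t j))).

(* [p1 t] is [(1 - eta) * mass1 t + eta] by definition. *)
Definition mass1 t := \sum_i q t i * (E t i)%:R.

Lemma qS t j : q t.+1 j = q t j * expR (- (eta * lhat t (E t j))) / normalizer t.
Proof. by []. Qed.

Lemma q_gt0 t j : 0 < q t j.
Proof.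
elim: t j => [|t IH] j; first by rewrite invr_gt0 ltr0n.
rewrite qS divr_gt0 ?mulr_gt0 ?expR_gt0 //.
by apply: (sumr_gt0 (Ordinal N_gt0)) => i; rewrite mulr_gt0 ?expR_gt0.
Qed.

Lemma normalizer_gt0 t : 0 < normalizer t.
Proof. by apply: (sumr_gt0 (Ordinal N_gt0)) => j; rewrite mulr_gt0 ?q_gt0 ?expR_gt0. Qed.

Lemma q_sum1 t : \sum_j q t j = 1.
Proof.
case: t => [|t] /=.
  by rewrite sumr_const card_ord -[_ *+ N]mulr_natr mulVf ?pnatr_eq0 -?lt0n.
by rewrite -mulr_suml mulfV ?gt_eqF ?(normalizer_gt0 t).
Qed.

Lemma q_le1 t j : q t j <= 1.
Proof.
rewrite -(q_sum1 t) (bigD1 j) //= lerDl.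
by apply: sumr_ge0 => i _; apply: ltW; apply: q_gt0.
Qed.

Lemma mass1_ge0 t : 0 <= mass1 t.
Proof. by apply: sumr_ge0 => i _; rewrite mulr_ge0 ?ler0n // ltW ?q_gt0. Qed.

Lemma mass1_le1 t : mass1 t <= 1.
Proof.
rewrite -(q_sum1 t); apply: ler_sum => i _.
by apply: ler_piMr; [exact: ltW (q_gt0 t i) | case: (E t i)].
Qed.

Lemma normalizerE t : normalizer t =
  mass1 t * expR (- (eta * lhat t true))
  + (1 - mass1 t) * expR (- (eta * lhat t false)).
Proof.
rewrite -(q_sum1 t) /normalizer /mass1 -sumrB !mulr_suml -big_split /=.
by apply: eq_bigr => i _; case: (E t i) => /=; ring.
Qed.

Lemma ln_q t j : ln (q t j) =
  - ln N%:R - eta * \sum_(s < t) lhat s (E s j) - \sum_(s < t) ln (normalizer s).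
Proof.
elim: t => [|t IH]; first by rewrite !big_ord0 /= lnV ?posrE ?ltr0n //; ring.
rewrite qS !big_ord_recr /= ln_div ?posrE ?mulr_gt0 ?q_gt0 ?expR_gt0 ?normalizer_gt0 //.
by rewrite lnM ?posrE ?q_gt0 ?expR_gt0 // expRK IH; ring.
Qed.

Lemma sum_ln_normalizer_ge t j :
  - ln N%:R - eta * \sum_(s < t) lhat s (E s j) <= \sum_(s < t) ln (normalizer s).
Proof. by have := ln_le0 (q_le1 t j); rewrite ln_q subr_le0. Qed.

Lemma round_bound t : 0 < eta -> eta <= 2^-1 ->
  \sum_(b : bool) pr t b * lhat t b + ln (normalizer t) / eta
  <= eta * lhat t true + eta * (p1 t * (1 - p1 t) * lhat t false ^+ 2)
     + eta * (p1 t * lhat t true ^+ 2).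
Proof.
move=> eta_gt0 eta_le_half; rewrite normalizerE.
exact: round_bound_mixture (mass1_ge0 t) (mass1_le1 t) _ _.
Qed.

Lemma sum_round_bound T : 0 < eta -> eta <= 2^-1 ->
  \sum_(t < T) \sum_(b : bool) pr t b * lhat t b
    + (\sum_(t < T) ln (normalizer t)) / eta
  <= eta * \sum_(t < T) lhat t true
     + eta * \sum_(t < T) p1 t * (1 - p1 t) * lhat t false ^+ 2
     + eta * \sum_(t < T) p1 t * lhat t true ^+ 2.
Proof.
move=> eta_gt0 eta_le_half.
rewrite mulr_suml -big_split !mulr_sumr -!big_split /=.
apply: ler_sum => t _; exact: (round_bound t eta_gt0 eta_le_half).
Qed.

End Exp4AT.

Theorem lemma6 (R : realType) (N T : nat) (eta : R)
  (E : nat -> 'I_N -> bool) (y yh : nat -> bool) :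
  (0 < N)%N -> 0 < eta -> eta < 2^-1 ->
  forall j : 'I_N,
    \sum_(t < T) \sum_(b : bool) pr eta E y yh t b * lhat eta E y yh t b
    - \sum_(t < T) lhat eta E y yh t (E t j)
    <= ln (N%:R) / eta
       + eta * \sum_(t < T) lhat eta E y yh t true
       + eta * \sum_(t < T) p1 eta E y yh t * (1 - p1 eta E y yh t)
                             * lhat eta E y yh t false ^+ 2
       + eta * \sum_(t < T) p1 eta E y yh t * lhat eta E y yh t true ^+ 2.
Proof.
move=> N_gt0 eta_gt0 eta_lt_half j.
have etaV_ge0 : 0 <= eta^-1 by rewrite invr_ge0 ltW.
have := sum_round_bound E y yh N_gt0 T eta_gt0 (ltW eta_lt_half).
have := ler_wpM2r etaV_ge0 (sum_ln_normalizer_ge eta E y yh N_gt0 T j).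
rewrite mulrBl mulNr -mulrA mulrCA mulfV ?gt_eqF // mulr1.
lra.
Qed.
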